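(* For every nonempty word $p\in\mathbb{P}^\ast$ with no immediate repetitions, $s(p)+s(p^{+1})=1$.
   Context: $\mathbb{P}$ denotes the positive integers and $\mathbb{P}^\ast$ the set of finite words over $\mathbb{P}$; $|p|$ is the length of $p$ and $p(i)$ its $i$th letter. The word $p^{+1}$ is defined by $p^{+1}(i)=p(i)+1$. A word $p$ has an immediate repetition if $p(i)=p(i+1)$ for some $i$. The infinite zigzag word is the concatenation $R_1R_2R_3\cdots$ of runs, where each odd-indexed run is the ascending sequence of all odd positive integers and each even-indexed run is the descending sequence of all even positive integers. A word $p$ occurs as a subsequence of the first $m$ runs if $p=q_1q_2\cdots q_m$ for (possibly empty) words $q_k$, where for odd $k$, $q_k$ is strictly increasing with odd letters, and for even $k$, $q_k$ is strictly decreasing with even letters. The score $s(p)$ is the least $m\ge 0$ such that $p$ occurs as a subsequence of the first $m$ runs, minus $|p|$. *)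

From mathcomp Require Import all_boot all_order all_algebra.
Set Implicit Arguments. Unset Strict Implicit. Unset Printing Implicit Defensive.

(* Words over the positive integers are represented by seq nat
   (positivity is imposed as a hypothesis where needed). *)

Definition shift1 (p : seq nat) : seq nat := map S p.

Definition has_imm_rep (p : seq nat) : Prop :=
  exists i, i.+1 < size p /\ nth 0 p i = nth 0 p i.+1.

(* q is a valid block for run number k (runs numbered from 1):
   odd k  : q strictly increasing with odd letters;
   even k : q strictly decreasing with even letters. *)
Definition run_ok (k : nat) (q : seq nat) : bool :=
  if odd k then all odd q && sorted ltn q
  else all (fun x => ~~ odd x) q && sorted (fun x y => y < x) q.

(* occb k m p : p = q_k q_{k+1} ... q_{k+m-1} with each q_j valid for run j. *)
Fixpoint occb (k m : nat) (p : seq nat) : bool :=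
  match m with
  | 0 => p == [::]
  | m'.+1 => has (fun j => run_ok k (take j p) && occb k.+1 m' (drop j p))
                 (iota 0 (size p).+1)
  end.

(* p occurs as a subsequence of the first m runs R_1 ... R_m. *)
Definition occurs_in_first (m : nat) (p : seq nat) : bool := occb 1 m p.

Lemma occbS (k m : nat) (p : seq nat) :
  occb k m.+1 p =
  has (fun j => run_ok k (take j p) && occb k.+1 m (drop j p)) (iota 0 (size p).+1).
Proof. by []. Qed.

Lemma run_ok_nil (k : nat) : run_ok k [::].
Proof. by rewrite /run_ok; case: ifP. Qed.

Lemma occb_exists (p : seq nat) (k : nat) : occb k (2 * size p) p.
Proof.
elim: p k => [|x p IH] k; first by [].
have -> : 2 * size (x :: p) = (2 * size p).+2 by rewrite /= mulnS.
rewrite occbS; apply/hasP; case: (boolP (run_ok k [:: x])) => Hx.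
- exists 1; first by rewrite mem_iota.
  rewrite take_cons take0 drop_cons drop0 Hx occbS.
  apply/hasP; exists 0; first by rewrite mem_iota.
  by rewrite take0 drop0 run_ok_nil IH.
- exists 0; first by rewrite mem_iota.
  rewrite take0 drop0 run_ok_nil occbS.
  apply/hasP; exists 1; first by rewrite mem_iota.
  rewrite take_cons take0 drop_cons drop0 IH andbT.
  move: Hx; rewrite /run_ok /= !andbT; case: (odd k) => //=.
  by move/negbNE.
Qed.

Lemma occurs_exists (p : seq nat) : exists m, occurs_in_first m p.
Proof. by exists (2 * size p); apply: occb_exists. Qed.

Definition min_runs (p : seq nat) : nat := ex_minn (occurs_exists p).

Definition score (p : seq nat) : int := (min_runs p)%:Z - (size p)%:Z.

From mathcomp Require Import all_boot all_order all_algebra.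
From mathcomp Require Import zify.
Import GRing.Theory.

(* Occurrence in runs is decided greedily, letter by letter.
   Once the current run contains the letter a, its parity is that of a, so
   the only question for the next letter x is how many new runs must be
   opened: none if x may follow a inside the run, one if x has the other
   parity (it starts the next run), two if x has the same parity but the
   wrong order (the next run is skipped).  Writing [step_cost a x] for this
   number, the least number of runs needed is a leading cost for the first
   letter plus the sum of the step costs along the word.  Summing along a word without
   immediate repetitions gives min_runs p + min_runs p^{+1} = 2|p| + 1, which
   is the theorem. *)

Definition continues (a x : nat) : bool :=
  (odd x == odd a) && (if odd a then a < x else x < a).

Definition step_cost (a x : nat) : nat :=
  if continues a x then 0 else if odd x != odd a then 1 else 2.

(* Runs opened after a current run ending with [a] to cover the word [s]. *)
Fixpoint extra_runs (a : nat) (s : seq nat) : nat :=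
  if s is x :: s' then step_cost a x + extra_runs x s' else 0.

(* Runs needed for [p] when the first available run has parity [b]. *)
Definition runs_needed (b : bool) (p : seq nat) : nat :=
  if p is x :: s then (if odd x == b then 1 else 2) + extra_runs x s else 0.

Lemma run_ok1 k x : run_ok k [:: x] = (odd x == odd k).
Proof. by rewrite /run_ok /=; case: (odd k); case: (odd x). Qed.

Lemma run_ok2 k a x : run_ok k [:: a; x] = (odd a == odd k) && continues a x.
Proof.
by rewrite /run_ok /continues /=; case: (odd k); case: (odd a); case: (odd x);
  rewrite //= ?andbT ?andbF.
Qed.

Lemma run_ok_cons2 k a x q :
  run_ok k [:: a, x & q] = run_ok k [:: a; x] && run_ok k (x :: q).
Proof.
rewrite /run_ok; case: (odd k) => /=; rewrite !andbT;
  by case: (odd a); case: (odd x); case: (all _ q); case: (_ < _);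
     case: (path _ _ _).
Qed.

Lemma occb_nil k m : occb k m [::].
Proof. by elim: m k => [|m IH] k //=; rewrite run_ok_nil IH. Qed.

Lemma occbP k m p :
  occb k m.+1 p <-> exists q r, [/\ p = q ++ r, run_ok k q & occb k.+1 m r].
Proof.
rewrite occbS; split.
- case/hasP => j _ /andP[Hq Hr]; exists (take j p), (drop j p).
  by rewrite cat_take_drop.
- case=> q [r [-> Hq Hr]]; apply/hasP; exists (size q).
  + by rewrite mem_iota size_cat; lia.
  + by rewrite take_size_cat // drop_size_cat // Hq Hr.
Qed.

Definition occb_after (k a m : nat) (s : seq nat) : Prop :=
  exists q r, [/\ s = q ++ r, run_ok k (a :: q) & occb k.+1 m r].

Lemma occb_after_cons k a m x s : odd a = odd k ->
  occb_after k a m (x :: s) <->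
  occb k.+1 m (x :: s) \/ (run_ok k [:: a; x] /\ occb_after k x m s).
Proof.
move=> Ha; split.
- case=> [[|y q]] [r [E Hq Hr]]; first by left; rewrite E.
  case: E => -> ->; right; move: Hq; rewrite run_ok_cons2 => /andP[Hax Hq].
  by split => //; exists q, r.
- case=> [H | [Hax [q [r [-> Hq Hr]]]]].
    by exists [::], (x :: s); rewrite run_ok1 Ha.
  by exists (x :: q), r; split => //; rewrite run_ok_cons2 Hax.
Qed.

Lemma occb_cons k m x s :
  occb k m.+1 (x :: s) <->
  occb k.+1 m (x :: s) \/ (run_ok k [:: x] /\ occb_after k x m s).
Proof.
rewrite occbP; split.
- case=> [[|y q]] [r [E Hq Hr]]; first by left; rewrite E.
  case: E => -> ->; right; split; last by exists q, r.
  by move: Hq; rewrite /run_ok; case: (odd k) => /= /andP[/andP[->]].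
- case=> [H | [_ [q [r [-> Hq Hr]]]]].
  + by exists [::], (x :: s); rewrite run_ok_nil.
  + by exists (x :: q), r.
Qed.

Lemma occb_cons_greedy s :
  (forall k a m, odd a = odd k -> occb_after k a m s <-> extra_runs a s <= m) ->
  forall k m x, occb k m (x :: s) <-> runs_needed (odd k) (x :: s) <= m.
Proof.
move=> Hafter k m x; elim: m k => [|m IH] k; first by rewrite /=; case: ifP.
rewrite occb_cons IH run_ok1 /=.
have -> : (odd x == ~~ odd k) = (odd x != odd k).
  by case: (odd x); case: (odd k).
case: eqP => [Hx | _] /=.
- by rewrite (Hafter k x m Hx); lia.
- by split; [case=> // -[] | left]; lia.
Qed.

Lemma occb_after_greedy s k a m :
  odd a = odd k -> occb_after k a m s <-> extra_runs a s <= m.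
Proof.
elim: s k a m => [|x s IH] k a m Ha.
  by split => // _; exists [::], [::]; rewrite occb_nil run_ok1 Ha.
rewrite occb_after_cons // (occb_cons_greedy s IH) run_ok2 Ha eqxx /=.
rewrite /step_cost.
have -> : (odd x == ~~ odd k) = (odd x != odd a).
  by rewrite Ha; case: (odd x); case: (odd k).
case Hc: (continues a x) => /=.
- have /eqP Hx : odd x == odd a by case/andP: Hc.
  by rewrite Hx eqxx (IH k x m) ?Hx //; lia.
- by split; [case=> // -[] | left].
Qed.

Lemma occbE k m p : occb k m p <-> runs_needed (odd k) p <= m.
Proof.
case: p => [|x s]; first by rewrite occb_nil.
exact: (occb_cons_greedy s (occb_after_greedy s) k m x).
Qed.

Lemma min_runsE p : min_runs p = runs_needed true p.
Proof.
rewrite /min_runs; case: ex_minnP => m /occbE /= Hm Hmin.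
have /Hmin : occb 1 (runs_needed true p) p by apply/occbE.
lia.
Qed.

(* Shifting flips the parity and the order of each run, so the step costs
   of a word and of its shift are complementary. *)
Lemma step_cost_shift (a x : nat) :
  a != x -> step_cost a x + step_cost a.+1 x.+1 = 2.
Proof.
rewrite /step_cost /continues /= !ltnS neq_ltn.
by case: (odd a); case: (odd x) => //= /orP[] H;
   rewrite ?H ?(ltnNge a x) ?(ltnNge x a) ?(ltnW H).
Qed.

Lemma extra_runs_shift (a : nat) (s : seq nat) :
  path (fun u v => u != v) a s ->
  extra_runs a s + extra_runs a.+1 (map S s) = 2 * size s.
Proof.
elim: s a => [|x s IH] a //= /andP[Hax Hs].
by rewrite addnACA step_cost_shift // IH // mulnS.
Qed.

(* The leading costs of x and x+1 from the odd run R_1 are 1 and 2. *)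
Lemma runs_needed_shift (x : nat) (s : seq nat) :
  path (fun u v => u != v) x s ->
  runs_needed true (x :: s) + runs_needed true (shift1 (x :: s)) =
  (2 * size (x :: s)).+1.
Proof.
move=> Hs; rewrite /= /shift1 addnACA extra_runs_shift // mulnS.
by case: (odd x).
Qed.

Lemma no_imm_rep_path (x : nat) (s : seq nat) :
  ~ has_imm_rep (x :: s) -> path (fun u v => u != v) x s.
Proof.
move=> Hrep; apply/(pathP 0) => i Hi; apply/eqP => E; apply: Hrep.
by exists i.
Qed.

Theorem mainTheorem2 (p : seq nat) :
  p <> [::] -> all (fun x => 0 < x) p -> ~ has_imm_rep p ->
  (score p + score (shift1 p) = 1)%R.
Proof.
case: p => [//|x s] _ _ /no_imm_rep_path /runs_needed_shift Hsum.
rewrite /score !min_runsE size_map; lia.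
Qed.
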